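(* Let $D=(V,A)$ be a digraph, $k\in\mathbb{N}$, and $\mathcal{B}_i=(V_i,A_i)$ $(i<k)$ pairwise edge-disjoint branchings in $D$ such that for every nonempty $X\subseteq V$, $\varrho_{D\setminus\!\setminus\mathcal{B}}(X)\geq|\{i<k:V_i\cap X=\varnothing\}|$. Let $B_1\subseteq B_0$ be dangerous sets with $\varrho_{D\setminus\!\setminus\mathcal{B}}(B_0)=\varrho_{D\setminus\!\setminus\mathcal{B}}(B_1)=l\geq1$. Let $\{e_1,\dots,e_l\}$ be the set of edges of $D\setminus\!\setminus\mathcal{B}$ entering $B_0$ and let $s_j$ be the head of $e_j$. Then there is a system of pairwise edge-disjoint paths $\{P_j\}_{j=1}^{l}$ in $(D\setminus\!\setminus\mathcal{B})[B_0]$ such that $P_j$ goes from $s_j$ to $B_1$. Moreover, any such path system contains every edge of $D\setminus\!\setminus\mathcal{B}$ with tail in $B_0\setminus B_1$ and head in $B_1$, and the multiset of the last vertices of the paths $P_j$ equals the multiset of heads of the edges of $D\setminus\!\setminus\mathcal{B}$ entering $B_1$.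
   Context: Digraphs may be of arbitrary cardinality with multiple edges. A branching is a digraph whose weakly connected components are arborescences (directed trees in which every vertex is reachable from the root). $D\setminus\!\setminus\mathcal{B}=(V,A\setminus\bigcup_{i<k}A_i)$; $H[B]$ is the subgraph of $H$ spanned by $B$. $\varrho_H(X)$ is the cardinality of the set of edges of $H$ with tail outside $X$ and head in $X$ (these are the edges entering $X$). A nonempty set $X\subseteq V$ is tight if $\varrho_{D\setminus\!\setminus\mathcal{B}}(X)=|\{i<k:V_i\cap X=\varnothing\}|$, and dangerous if it is tight and $X\cap V_0\neq\varnothing$. Paths are directed simple paths; a path $P$ goes from $X$ to $Y$ if $V(P)\cap X=\{\mathrm{start}(P)\}$ and $V(P)\cap Y=\{\mathrm{end}(P)\}$ (start and end may coincide; for a vertex $x$, ''from $x$'' means from $\{x\}$). *)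

From HB Require Import structures.
From mathcomp Require Import all_boot.
From mathcomp Require Import boolp.
From Stdlib Require List.
From Stdlib Require Import Permutation.

Set Implicit Arguments.
Unset Strict Implicit.
Unset Printing Implicit Defensive.

Record digraph := Digraph {
  vert : Type;
  edge : Type;
  tl : edge -> vert;
  hd : edge -> vert }.

Section Defs.
Variable D : digraph.
Notation V := (vert D).
Notation E := (edge D).

Definition enters (X : V -> Prop) (e : E) : Prop := ~ X (tl e) /\ X (hd e).

Definition in_deg_atleast (H : E -> Prop) (X : V -> Prop) (n : nat) : Prop :=
  exists L : list E, List.NoDup L /\ List.length L = n /\
    List.Forall (fun e => H e /\ enters X e) L.

Definition in_deg_eq (H : E -> Prop) (X : V -> Prop) (n : nat) : Prop :=
  exists L : list E, List.NoDup L /\ List.length L = n /\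
    forall e, List.In e L <-> (H e /\ enters X e).

(* edge set of D \\ B, where B = (Vs i, As i)_{i<k} *)
Definition remaining (k : nat) (As : nat -> E -> Prop) : E -> Prop :=
  fun e => ~ (exists i, (i < k)%N /\ As i e).

Definition missing (k : nat) (Vs : nat -> V -> Prop) (X : V -> Prop) : nat :=
  count (fun i => `[< forall v, Vs i v -> ~ X v >]) (iota 0 k).

Definition nonempty (X : V -> Prop) : Prop := exists v, X v.

Definition tight k (Vs : nat -> V -> Prop) (As : nat -> E -> Prop)
  (X : V -> Prop) : Prop :=
  nonempty X /\ in_deg_eq (remaining k As) X (missing k Vs X).

Definition dangerous k (Vs : nat -> V -> Prop) (As : nat -> E -> Prop)
  (X : V -> Prop) : Prop :=
  tight k Vs As X /\ exists v, X v /\ Vs 0 v.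

Fixpoint dwalk (H : E -> Prop) (v : V) (es : list E) : Prop :=
  match es with
  | nil => True
  | e :: es' => H e /\ tl e = v /\ dwalk H (hd e) es'
  end.

Definition verts (v : V) (es : list E) : list V := v :: List.map (@hd D) es.
Definition endv (v : V) (es : list E) : V := List.last (verts v es) v.

Definition dpath (H : E -> Prop) (P : V * list E) : Prop :=
  dwalk H P.1 P.2 /\ List.NoDup (verts P.1 P.2).

Definition goes_from_to (X Y : V -> Prop) (P : V * list E) : Prop :=
  (forall v, (List.In v (verts P.1 P.2) /\ X v) <-> v = P.1) /\
  (forall v, (List.In v (verts P.1 P.2) /\ Y v) <-> v = endv P.1 P.2).

Definition path_in_induced (H : E -> Prop) (X : V -> Prop) (P : V * list E) :=
  dpath H P /\ List.Forall X (verts P.1 P.2).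

Definition joins (e : E) (a b : V) : Prop :=
  (tl e = a /\ hd e = b) \/ (tl e = b /\ hd e = a).

Fixpoint uwalkv (F : E -> Prop) (v : V) (es : list E) (vs : list V) : Prop :=
  match es, vs with
  | nil, nil => True
  | e :: es', u :: vs' => F e /\ joins e v u /\ uwalkv F u es' vs'
  | _, _ => False
  end.

(* a cycle of the underlying undirected multigraph (loops and pairs of
   parallel edges count as cycles) *)
Definition ucycle (F : E -> Prop) : Prop :=
  exists v es vs, es <> nil /\ List.NoDup es /\ uwalkv F v es vs /\
    List.last vs v = v /\ List.NoDup vs.

Definition uconn (F : E -> Prop) (v w : V) : Prop :=
  exists es vs, uwalkv F v es vs /\ List.last vs v = w.

Definition dreach (F : E -> Prop) (r w : V) : Prop :=
  exists es, dwalk F r es /\ endv r es = w.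

(* (W, F) is a branching: every weakly connected component is an
   arborescence, i.e. the underlying multigraph has no cycle (so each
   component is a tree) and each component has a root from which every
   vertex of the component is reachable by a directed path. *)
Definition branching (W : V -> Prop) (F : E -> Prop) : Prop :=
  ~ ucycle F /\
  forall v, W v -> exists r, W r /\ forall w, uconn F v w -> dreach F r w.

Definition subgraph (W : V -> Prop) (F : E -> Prop) : Prop :=
  forall e, F e -> W (tl e) /\ W (hd e).

Definition path_system (H : E -> Prop) (B0 B1 : V -> Prop) (l : nat)
  (e : 'I_l -> E) (P : 'I_l -> V * list E) : Prop :=
  (forall j, path_in_induced H B0 (P j) /\
             goes_from_to (fun v => v = hd (e j)) B1 (P j)) /\
  (forall j j', j <> j' -> forall f, List.In f (P j).2 -> List.In f (P j').2 -> False).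

End Defs.

From HB Require Import structures.
From mathcomp Require Import all_boot.
From mathcomp Require Import boolp.
From Stdlib Require List.
From Stdlib Require Import Permutation.
From mathcomp Require Import zify.

Set Implicit Arguments.
Unset Strict Implicit.
Unset Printing Implicit Defensive.

(* Every Z with B1 <= Z <= B0 misses at least the branchings that B0 misses,
   so the cut condition gives rho(Z) >= rho(B0) = l.  Menger's theorem then
   yields l edge-disjoint paths from the s_j to B1 inside B0: augment a unit
   flow along residual walks from unused sources; when no such walk reaches B1,
   the part of B0 they do not reach is a set Z as above that is entered by
   fewer than l edges.  Conversely, for any such path system the last edges of
   the walks e_j P_j are l distinct edges entering B1, hence all of them. *)

HB.instance Definition _ (D : digraph) := gen_eqMixin (vert D).
HB.instance Definition _ (D : digraph) := gen_eqMixin (edge D).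

Lemma InP (T : eqType) (x : T) s : reflect (List.In x s) (x \in s).
Proof.
elim: s => [|y s IH] /=; first by constructor.
rewrite in_cons; apply: (iffP orP) => [[/eqP ->|/IH]|[->|/IH]];
  by [left | right | rewrite eqxx |].
Qed.

Lemma NoDupP (T : eqType) (s : seq T) : reflect (List.NoDup s) (uniq s).
Proof.
elim: s => [|x s IH] /=; first by do 2 constructor.
apply: (iffP andP) => [[/InP xs /IH]|xs]; first by constructor.
by inversion xs; split; [apply/InP | apply/IH].
Qed.

Lemma List_lastE (T : Type) (x d : T) s : List.last (x :: s) d = last x s.
Proof. by elim: s x => //= y s IH x; rewrite -IH. Qed.

Lemma count_split (T : Type) (a b : pred T) s :
  count a s = count (fun x => a x && b x) s + count (fun x => a x && ~~ b x) s.
Proof. by elim: s => //= x s ->; case: (a x); case: (b x) => /=; lia. Qed.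

Lemma count_in_sum (X T : eqType) (phi : X -> T) (U : seq T) (s : seq X) : uniq U ->
  count (fun x => phi x \in U) s = \sum_(v <- U) count (fun x => phi x == v) s.
Proof.
move=> Uu; elim: s => [|x s IH] /=; first by rewrite big1.
rewrite big_split /= -IH -(count_uniq_mem _ Uu) -sum1_count big_mkcond /=.
by congr (_ + _); apply: eq_bigr => v _; rewrite eq_sym; case: eqP.
Qed.

Section Walks.
Variable D : digraph.
Local Notation V := (vert D).
Local Notation E := (edge D).
Implicit Types (G : E -> Prop) (u v : V) (f : E) (w : seq E).

Lemma vertsE v w : verts v w = v :: map (@hd D) w.
Proof. by []. Qed.

Lemma endvE v w : endv v w = last v (map (@hd D) w).
Proof. exact: List_lastE. Qed.

Lemma endv_cons v f w : endv v (f :: w) = endv (hd f) w.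
Proof. by rewrite !endvE. Qed.

Lemma endv_rcons v w f : endv v (rcons w f) = hd f.
Proof. by rewrite endvE map_rcons last_rcons. Qed.

Lemma endv_in v w : endv v w \in verts v w.
Proof. by rewrite endvE mem_last. Qed.

Lemma dwalk_sub G G' v w : (forall f, G f -> G' f) -> dwalk G v w -> dwalk G' v w.
Proof.
move=> GG'; elim: w v => //= f w IH v [Gf [fv Gw]].
by split; [exact: GG' | split; [|exact: IH]].
Qed.

Lemma dwalk_mem G v w f : dwalk G v w -> f \in w -> G f.
Proof.
elim: w v => //= g w IH v [Gg [_ Gw]].
by rewrite in_cons => /predU1P [-> //| /(IH _ Gw)].
Qed.

Lemma dwalk_rcons G v w f :
  dwalk G v (rcons w f) <-> dwalk G v w /\ G f /\ tl f = endv v w.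
Proof. by elim: w v => [|g w IH] v /=; rewrite ?endv_cons ?IH; tauto. Qed.

Lemma dwalk_verts (X : V -> Prop) G v w :
  dwalk G v w -> X v -> (forall f, G f -> X (hd f)) -> List.Forall X (verts v w).
Proof.
move=> + + GX; elim: w v => [|f w IH] v /=; first by move=> _ Xv; repeat constructor.
by move=> [Gf [_ Gw]] Xv; constructor; [|apply: IH => //; apply: GX].
Qed.

Lemma dwalk_suffix G v w u : dwalk G v w -> u \in verts v w ->
  exists w', [/\ dwalk G u w', endv u w' = endv v w,
                 suffix (verts u w') (verts v w) & {subset w' <= w}].
Proof.
elim: w v => [|f w IH] v.
  by move=> _; rewrite mem_seq1 => /eqP ->; exists [::]; rewrite suffix_refl.
move=> /= [Gf [fv Gw]]; rewrite vertsE in_cons => /predU1P [->|uw].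
  by exists (f :: w); split=> //; apply: suffix_refl.
have [w' [Gw' endw' sufw' subw']] := IH _ Gw uw.
exists w'; split=> //; first by rewrite endv_cons.
  by apply: (suffix_trans sufw'); exact: suffix_cons.
by move=> g /subw'; rewrite in_cons orbC => ->.
Qed.

Lemma dwalk_shorten G (T : V -> Prop) v w : dwalk G v w -> T (endv v w) ->
  exists2 p, {subset p <= w} &
    [/\ dwalk G v p, uniq (verts v p), T (endv v p)
      & forall u, u \in verts v p -> T u -> u = endv v p].
Proof.
elim: w v => [|f w IH] v.
  by move=> _ Tv; exists [::] => //; split=> // u; rewrite mem_seq1 => /eqP.
move=> /= [Gf [fv Gw]]; rewrite endv_cons => Tend.
have [Tv | nTv] := pselect (T v).
  by exists [::] => //; split=> // u; rewrite mem_seq1 => /eqP.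
have [p pw [Gp up Tp onlyT]] := IH _ Gw Tend.
have [vp | vNp] := boolP (v \in verts (hd f) p).
  have [p' [Gp' endp' sufp' subp']] := dwalk_suffix Gp vp.
  exists p'; first by move=> g /subp'/pw; rewrite in_cons orbC => ->.
  split; [done | exact: suffix_uniq sufp' up | by rewrite endp' |].
  by move=> u /(mem_infix (suffixW sufp')) up' Tu; rewrite endp'; exact: onlyT.
exists (f :: p).
  by move=> g; rewrite !in_cons => /predU1P [->|/pw ->]; rewrite ?eqxx ?orbT.
rewrite endv_cons; split=> //; first by apply/andP; split.
by move=> u; rewrite vertsE in_cons => /predU1P [-> //|]; exact: onlyT.
Qed.

Lemma dwalk_to_dpath G (T : V -> Prop) v w : dwalk G v w -> T (endv v w) ->
  exists2 p, {subset p <= w} & dpath G (v, p) /\ goes_from_to (fun u => u = v) T (v, p).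
Proof.
move=> Gw Tw; have [p pw [Gp up Tp onlyT]] := dwalk_shorten Gw Tw.
exists p => //; split; first by split=> //; apply/NoDupP.
split=> u; split.
- by case=> _ ->.
- by move=> ->; split=> //; left.
- by case=> /InP pu Tu; exact: onlyT.
- by move=> ->; split=> //; apply/InP; exact: endv_in.
Qed.

End Walks.

Section Flows.
Variable D : digraph.
Local Notation V := (vert D).
Local Notation E := (edge D).
Variable H : E -> Prop.
Variables B0 B1 : V -> Prop.

Definition flow_edge f := H f /\ B0 (tl f) /\ ~ B1 (tl f) /\ B0 (hd f).

Definition outflow (F : seq E) v := count (fun f => tl f == v) F.
Definition inflow (F : seq E) v := count (fun f => hd f == v) F.

(* S is the multiset of sources and B1 the set of sinks. *)
Definition is_flow (F : seq E) (S : seq V) :=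
  [/\ uniq F, {in F, forall f, flow_edge f}
    & forall v, B0 v -> ~ B1 v -> outflow F v = inflow F v + count_mem v S].

Lemma flow_conservation_sum (P : pred V) F S :
  (forall v, P v -> outflow F v = inflow F v + count_mem v S) ->
  count (fun f => P (tl f)) F = count (fun f => P (hd f)) F + count P S.
Proof.
move=> conservation.
pose U := undup [seq v <- [seq tl f | f <- F] ++ [seq hd f | f <- F] ++ S | P v].
have Uu : uniq U := undup_uniq _.
have -> : count (fun f => P (tl f)) F = count (fun f => tl f \in U) F.
  by apply: eq_in_count => f Ff; rewrite mem_undup mem_filter !mem_cat map_f ?andbT.
have -> : count (fun f => P (hd f)) F = count (fun f => hd f \in U) F.
  by apply: eq_in_count => f Ff; rewrite mem_undup mem_filter !mem_cat map_f //= orbT andbT.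
have -> : count P S = count (fun v => id v \in U) S.
  by apply: eq_in_count => v Sv; rewrite mem_undup mem_filter !mem_cat Sv !orbT andbT.
rewrite !count_in_sum // -big_split /=; apply: eq_big_seq => v.
by rewrite mem_undup mem_filter => /andP [/conservation].
Qed.

Lemma flow_peel F v S : B0 v -> is_flow F (v :: S) ->
  exists w, [/\ dwalk (fun f => f \in F) v w, B1 (endv v w)
              & is_flow [seq f <- F | f \notin w] S].
Proof.
have [n] := ubnP (size F); elim: n F v => // n IH F v /ltnSE sizeF v0 [Fu Fe Fc].
have [v1 | vN1] := pselect (B1 v).
  exists [::]; split=> //; rewrite (eq_filter (a2 := predT)) ?filter_predT //.
  split=> // u u0 u1; rewrite Fc //=.
  by have /negbTE -> : v != u by apply/eqP => vu; apply: u1; rewrite -vu.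
have : 0 < outflow F v by rewrite Fc //= eqxx; lia.
rewrite /outflow -has_count => /hasP [f Ff /eqP fv].
have [_ [_ [_ f0]]] := Fe f Ff.
have countF (a : pred E) : count a F = a f + count a (rem f F).
  by rewrite (permP (perm_to_rem Ff)).
have flow_rem : is_flow (rem f F) (hd f :: S).
  split; [exact: rem_uniq | by move=> g /mem_rem /Fe |].
  move=> u u0 u1; have := Fc u u0 u1.
  by rewrite /outflow /inflow !countF /= fv; lia.
have [|w [Gw wB1 flow_rest]] := IH (rem f F) (hd f) _ f0 flow_rem.
  by rewrite size_rem //; case: (F) Ff sizeF.
exists (f :: w); split.
- by split=> //; split=> //; apply: dwalk_sub Gw => g /mem_rem.
- by rewrite endv_cons.
rewrite rem_filter // -filter_predI in flow_rest.
rewrite (eq_filter (a2 := predI (fun g => g \notin w) (predC1 f))) // => g.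
by rewrite /= in_cons negb_or andbC.
Qed.

Lemma flow_decompose (T : eqType) (src : T -> V) (J : seq T) F :
  uniq J -> (forall j, B0 (src j)) -> is_flow F (map src J) ->
  exists W : T -> seq E,
    (forall j, j \in J ->
       dwalk (fun f => f \in F) (src j) (W j) /\ B1 (endv (src j) (W j))) /\
    (forall i j, i \in J -> j \in J -> i != j ->
       forall f, f \in W i -> f \in W j -> False).
Proof.
elim: J F => [|j J IH] F /=; first by exists (fun=> [::]).
move=> /andP [jNJ Ju] src0 flowF.
have [w [Gw wB1 flow_rest]] := flow_peel (src0 j) flowF.
have [W [HW disjW]] := IH _ Ju src0 flow_rest.
have W_w i f : i \in J -> f \in W i -> f \notin w.
  by move=> iJ /(dwalk_mem (HW i iJ).1); rewrite mem_filter => /andP [].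
have neq_j i : i \in J -> (i == j) = false.
  by move=> iJ; apply/eqP => ij; rewrite -ij iJ in jNJ.
exists (fun i => if i == j then w else W i); split.
  move=> i; rewrite in_cons => /predU1P [-> | iJ]; first by rewrite eqxx.
  rewrite neq_j //; have [Wi Wi1] := HW i iJ; split=> //.
  by apply: dwalk_sub Wi => f; rewrite mem_filter => /andP [].
move=> i i'; rewrite !in_cons => /predU1P [-> | iJ] /predU1P [-> | i'J]; rewrite ?eqxx //.
- by rewrite neq_j // => _ f fw /(W_w _ _ i'J); rewrite fw.
- by rewrite neq_j // => _ f /(W_w _ _ iJ) /negP.
- by rewrite !neq_j //; exact: disjW.
Qed.

End Flows.

Section Menger.
Variable D : digraph.
Local Notation V := (vert D).
Local Notation E := (edge D).
Variable H : E -> Prop.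
Variables B0 B1 : V -> Prop.
Hypothesis B10 : forall v, B1 v -> B0 v.
Variables (l : nat) (e : 'I_l -> E).
Local Notation s j := (hd (e j)).
Hypothesis e_enters : forall j, H (e j) /\ enters B0 (e j).
Hypothesis enters_e : forall f, H f -> enters B0 f -> exists j, e j = f.
Hypothesis cut_B1_B0 : forall Z : V -> Prop,
  (forall v, B1 v -> Z v) -> (forall v, Z v -> B0 v) ->
  exists L : seq E, [/\ uniq L, l <= size L & forall g, g \in L -> H g /\ enters Z g].

Local Notation flow_edge := (flow_edge H B0 B1).
Local Notation is_flow := (is_flow H B0 B1).

(* The arc (f, true) traverses f forwards, (f, false) backwards. *)
Definition arc_src (a : E * bool) := if a.2 then tl a.1 else hd a.1.
Definition arc_tgt (a : E * bool) := if a.2 then hd a.1 else tl a.1.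
Arguments arc_src a /.
Arguments arc_tgt a /.

Definition residual (F : seq E) (a : E * bool) :=
  if a.2 then flow_edge a.1 /\ a.1 \notin F else a.1 \in F /\ ~ B1 (hd a.1).

Fixpoint rwalk F x (w : seq (E * bool)) y :=
  if w is a :: w' then [/\ residual F a, arc_src a = x & rwalk F (arc_tgt a) w' y]
  else x = y.

Lemma rwalk_cat F x w1 w2 y :
  rwalk F x (w1 ++ w2) y <-> exists2 z, rwalk F x w1 z & rwalk F z w2 y.
Proof.
elim: w1 x => [|a w1 IH] x /=; first by split=> [|[z ->]]; [exists x|].
split=> [[Ra ax /IH [z Rw1 Rw2]] | [z [Ra ax Rw1] Rw2]]; first by exists z.
by split=> //; apply/IH; exists z.
Qed.

Lemma rwalk_ext F F' x w y : {in w, forall a, (a.1 \in F) = (a.1 \in F')} ->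
  rwalk F x w y -> rwalk F' x w y.
Proof.
elim: w x => [|[f b] w IH] x //= FF' [Ra fx Rw]; split=> //.
  by move: Ra; rewrite /residual /= (FF' (f, b)) ?mem_head.
by apply: IH => // a aw; apply: FF'; rewrite in_cons aw orbT.
Qed.

Lemma rwalk_B0 F x w y : {in F, forall f, flow_edge f} -> B0 x -> rwalk F x w y -> B0 y.
Proof.
move=> Fe; elim: w x => [|[f [|]] w IH] x /=; first by move=> + <-.
- by move=> _ [[[_ [_ [_ f0]]] _] _ Rw]; exact: IH Rw.
- by move=> _ [[/Fe [_ [f0 _]] _] _ Rw]; exact: IH Rw.
Qed.

Lemma residual_fst_inj F a a' : residual F a -> residual F a' -> a.1 = a'.1 -> a = a'.
Proof.
case: a a' => f [|] [f' [|]] /= + + ff'; rewrite /residual /= -ff' //.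
- by case=> _ /negP fF [].
- by case=> fF _ [_ /negP].
Qed.

(* x holds one unit of excess, which the residual walk carries to y in B1. *)
Lemma augment w F S x y : rwalk F x w y -> uniq (map fst w) -> B1 y ->
  uniq F -> {in F, forall f, flow_edge f} ->
  (forall v, B0 v -> ~ B1 v -> outflow F v + (x == v) = inflow F v + count_mem v S) ->
  exists F', is_flow F' S.
Proof.
elim: w F x => [|[f b] w IH] F x /=.
  move=> -> _ y1 Fu Fe Fc; exists F; split=> // v v0 v1.
  have /negbTE yv : y != v by apply/eqP => yv; apply: v1; rewrite -yv.
  by have := Fc v v0 v1; rewrite yv addn0.
move=> [Ra fx Rw] /andP [fNw wu] y1 Fu Fe Fc.
have Rw_off_f F' :
    (forall g, g != f -> (g \in F) = (g \in F')) -> rwalk F' (arc_tgt (f, b)) w y.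
  move=> FF'; apply: rwalk_ext Rw => a aw; apply: FF'.
  by apply: contraNneq fNw => <-; exact: map_f.
case: b Ra fx Rw Rw_off_f => [[fe fNF] | [fF _]] /= fx _ Rw_off_f.
  apply: (IH (f :: F) (hd f)) => //.
  - by apply: Rw_off_f => g gf; rewrite in_cons (negbTE gf).
  - by rewrite /= fNF.
  - by move=> g; rewrite in_cons => /predU1P [-> | /Fe].
  - by move=> v v0 v1; have := Fc v v0 v1; rewrite /outflow /inflow /= fx; lia.
have countF (a : pred E) : count a F = a f + count a (rem f F).
  by rewrite (permP (perm_to_rem fF)).
apply: (IH (rem f F) (tl f)) => //.
- by apply: Rw_off_f => g gf; rewrite (mem_rem_uniq _ Fu) inE gf.
- exact: rem_uniq.
- by move=> g /mem_rem /Fe.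
- by move=> v v0 v1; have := Fc v v0 v1; rewrite /outflow /inflow !countF /= fx; lia.
Qed.

Definition reachable F (J : seq 'I_l) x :=
  exists j w, [/\ j \notin J, rwalk F (s j) w x & uniq (map fst w)].

Lemma reachable_step F J x a :
  reachable F J x -> residual F a -> arc_src a = x -> reachable F J (arc_tgt a).
Proof.
move=> [j [w [jNJ Rw wu]]] Ra ax; exists j.
have [aw | aNw] := boolP (a.1 \in map fst w); last first.
  exists (w ++ [:: a]); split=> //; first by apply/rwalk_cat; exists x.
  by rewrite map_cat cats1 rcons_uniq aNw.
(* The walk already uses the edge of a, necessarily in the same direction: cut it there. *)
have [a' a'w aa'] := mapP aw.
move: Rw wu; case/splitPr: a'w => w1 w2 /rwalk_cat [z Rw1 /= [Ra' a'z _]].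
rewrite -cat1s catA map_cat cat_uniq => /andP [w1a'u _].
rewrite (residual_fst_inj Ra Ra' aa'); exists (w1 ++ [:: a']); split=> //.
by apply/rwalk_cat; exists z.
Qed.

Lemma reachable_B0 F J x : {in F, forall f, flow_edge f} -> reachable F J x -> B0 x.
Proof.
move=> Fe [j [w [_ Rw _]]]; apply: rwalk_B0 Rw => //.
by case: (e_enters j) => _ [].
Qed.

Lemma augment_flow F J : is_flow F (map (fun j => s j) J) -> uniq J ->
  (exists2 y, reachable F J y & B1 y) ->
  exists F' J', [/\ is_flow F' (map (fun j => s j) J'), uniq J' & size J' = (size J).+1].
Proof.
move=> [Fu Fe Fc] Ju [y [j [w [jNJ Rw wu]]] y1].
have [|F' flowF'] := augment (S := map (fun j => s j) (j :: J)) Rw wu y1 Fu Fe.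
  by move=> v v0 v1; rewrite Fc //=; lia.
by exists F', (j :: J); rewrite /= jNJ Ju.
Qed.

Section NoAugmentingWalk.
Variables (F : seq E) (J : seq 'I_l).
Hypothesis flowF : is_flow F (map (fun j => s j) J).
Hypothesis reachable_B1 : forall y, reachable F J y -> ~ B1 y.
Local Notation R := (fun v => `[< reachable F J v >]).

Lemma enters_unreachable g : H g -> enters (fun v => B0 v /\ ~ reachable F J v) g ->
  g \in [seq e j | j <- J & ~~ R (s j)] ++ [seq f <- F | R (tl f) && ~~ R (hd f)].
Proof.
move=> Hg [tlN [hd0 hdN]]; rewrite mem_cat.
have [tl0 | tlN0] := pselect (B0 (tl g)); last first.
  have [j ej] := enters_e Hg (conj tlN0 hd0); rewrite -ej in hdN *.
  rewrite map_f // mem_filter; apply/andP; split; first exact/asboolPn.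
  by apply/negPn/negP => jNJ; apply: hdN; exists j, [::].
have tlR : reachable F J (tl g) by apply: contrapT => tlNR; exact: tlN.
apply/orP; right; rewrite mem_filter; apply/andP; split.
  by apply/andP; split; [exact/asboolP | exact/asboolPn].
apply/negPn/negP => gNF; apply: hdN; apply: (reachable_step (a := (g, true)) tlR) => //.
by split=> //; split=> //; split=> //; split=> //; exact: reachable_B1.
Qed.

Lemma flow_leaving_reachable :
  count (fun f => R (tl f) && ~~ R (hd f)) F = count (fun j => R (s j)) J.
Proof.
have [_ Fe Fc] := flowF.
have : count (fun f => R (tl f)) F =
       count (fun f => R (hd f)) F + count R (map (fun j => s j) J).
  apply: flow_conservation_sum => v /asboolP Rv.
  by apply: Fc; [exact: reachable_B0 Rv | exact: reachable_B1].
rewrite (count_split _ (fun f => R (hd f))).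
rewrite [count (fun f => R (hd f)) F](count_split _ (fun f => R (tl f))).
have -> : count (fun f => R (hd f) && ~~ R (tl f)) F = 0.
  apply/eqP; rewrite -leqn0 leqNgt -has_count.
  apply/hasP => -[g gF /andP [/asboolP hR /asboolPn tNR]]; apply: tNR.
  apply: (reachable_step (a := (g, false)) hR) => //=.
  by split=> //; exact: reachable_B1.
have -> : count (fun f => R (hd f) && R (tl f)) F = count (fun f => R (tl f) && R (hd f)) F.
  by apply: eq_count => f; rewrite andbC.
have -> : count R (map (fun j => s j) J) = count (fun j => R (s j)) J by rewrite count_map.
lia.
Qed.

Lemma flow_saturated : l <= size J.
Proof.
have [L [Lu lL LZ]] := cut_B1_B0 (Z := fun v => B0 v /\ ~ reachable F J v)
  (fun v v1 => conj (B10 v1) (fun Rv => reachable_B1 Rv v1)) (fun v => @proj1 _ _).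
have /(uniq_leq_size Lu) : {subset L <= [seq e j | j <- J & ~~ R (s j)] ++
                                  [seq f <- F | R (tl f) && ~~ R (hd f)]}.
  by move=> g /LZ [Hg gZ]; exact: enters_unreachable.
rewrite size_cat size_map !size_filter flow_leaving_reachable addnC.
by rewrite (count_predC (fun j => R (s j))) => /(leq_trans lL).
Qed.

End NoAugmentingWalk.

Lemma flow_saturating m : m <= l ->
  exists F J, [/\ is_flow F (map (fun j => s j) J), uniq J & size J = m].
Proof.
elim: m => [|m IH] ml; first by exists [::], [::].
have [F [J [flowF Ju sizeJ]]] := IH (ltnW ml).
have [augmenting | noB1] := pselect (exists2 y, reachable F J y & B1 y).
  have [F' [J' [flowF' J'u sizeJ']]] := augment_flow flowF Ju augmenting.
  by exists F', J'; rewrite sizeJ' sizeJ.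
have := flow_saturated flowF (fun y Ry y1 => noB1 (ex_intro2 _ _ y Ry y1)).
by rewrite sizeJ leqNgt ml.
Qed.

Lemma edge_disjoint_paths : exists P, path_system H B0 B1 e P.
Proof.
have [F [J [flowF Ju sizeJ]]] := flow_saturating (leqnn l).
have [_ Fe _] := flowF.
have J_all j : j \in J.
  have [|_ ->] := uniq_min_size Ju (fun j _ => mem_enum _ j); last exact: mem_enum.
  by rewrite size_enum_ord sizeJ.
have s0 j : B0 (s j) by case: (e_enters j) => _ [].
have [W [HW disjW]] := flow_decompose Ju s0 flowF.
have paths j : exists p, {subset p <= W j} /\
    dpath (fun f => f \in F) (s j, p) /\ goes_from_to (fun u => u = s j) B1 (s j, p).
  by have [Wj Wj1] := HW j (J_all j); have [p] := dwalk_to_dpath Wj Wj1; exists p.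
have [p Hp] := choice paths.
exists (fun j => (s j, p j)); split.
  move=> j; have [_ [[Fp up] goes]] := Hp j; split=> //; split.
    by split=> //; apply: dwalk_sub Fp => f /Fe [].
  by apply: dwalk_verts Fp (s0 j) _ => f /Fe [_ [_ [_]]].
move=> j j' jj' f /InP fj /InP fj'.
apply: (disjW j j' (J_all j) (J_all j') _ f (proj1 (Hp j) f fj) (proj1 (Hp j') f fj')).
exact/eqP.
Qed.

End Menger.

Section LastEdges.
Variable D : digraph.
Local Notation V := (vert D).
Local Notation E := (edge D).
Variable H : E -> Prop.
Variables B0 B1 : V -> Prop.
Hypothesis B10 : forall v, B1 v -> B0 v.
Variables (l : nat) (e : 'I_l -> E).
Hypothesis e_inj : injective e.
Hypothesis e_enters : forall j, H (e j) /\ enters B0 (e j).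
Variable P : 'I_l -> V * list E.
Hypothesis HP : path_system H B0 B1 e P.
Variable L1 : list E.
Hypothesis L1_length : length L1 = l.
Hypothesis L1_B1 : forall f, List.In f L1 <-> H f /\ enters B1 f.

Definition last_edge j := last (e j) (P j).2.

Lemma last_edge_spec j :
  [/\ H (last_edge j), enters B1 (last_edge j), hd (last_edge j) = endv (P j).1 (P j).2
    & last_edge j = e j \/ List.In (last_edge j) (P j).2 /\ B0 (tl (last_edge j))].
Proof.
have [[[Gp up] Bp] [from_s to_B1]] := HP.1 j; rewrite /last_edge.
move: Gp up Bp from_s to_B1; case: (P j) => v p Gp up Bp from_s to_B1 /=.
have start : v = hd (e j) by have [_ ->] := (from_s v).2 erefl.
have end1 : B1 (endv v p) by have [_] := (to_B1 _).2 erefl.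
subst v; clear from_s; case/lastP: p Gp up Bp to_B1 end1 => [|p g] Gp up Bp to_B1 end1.
  have [He [tlN _]] := e_enters j.
  by split=> //; [split=> // /B10 | left].
rewrite last_rcons endv_rcons in end1 *.
move/dwalk_rcons: Gp => [_ [Hg tlg]].
have tlg_in : tl g \in verts (hd (e j)) (rcons p g).
  by rewrite vertsE map_rcons -rcons_cons mem_rcons in_cons tlg endv_in orbT.
move/NoDupP: up; rewrite vertsE map_rcons -rcons_cons rcons_uniq => /andP [hdgN _].
split=> //.
  split=> // tlg1; suff tl_hd : tl g = hd g.
    by move: hdgN; rewrite -tl_hd -vertsE tlg endv_in.
  by rewrite -(endv_rcons (hd (e j)) p g); apply: (to_B1 _).1; split; [apply/InP|].
right; split; first by apply/InP; rewrite mem_rcons mem_head.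
by move/List.Forall_forall: Bp; apply; apply/InP.
Qed.

Lemma last_edge_inj : injective last_edge.
Proof.
move=> j j' jj'; have [// | ne] := pselect (j = j'); exfalso.
have e_tl i : ~ B0 (tl (e i)) by case: (e_enters i) => _ [].
have [_ _ _ [ej | [inj tlj]]] := last_edge_spec j;
  have [_ _ _ [ej' | [inj' tlj']]] := last_edge_spec j'.
- by apply: ne; apply: e_inj; rewrite -ej -ej'.
- by apply: (e_tl j); rewrite -ej jj'.
- by apply: (e_tl j'); rewrite -ej' -jj'.
- by apply: (HP.2 j j' ne (last_edge j)); rewrite // jj'.
Qed.

Lemma last_edges_perm : Permutation (List.map last_edge (enum 'I_l)) L1.
Proof.
apply: NoDup_Permutation_bis.
- by apply/NoDupP; rewrite (map_inj_uniq last_edge_inj) enum_uniq.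
- rewrite L1_length List.length_map -[length _]/(size (enum _)) size_enum_ord.
  exact/leP.
- move=> f /List.in_map_iff [j [<- _]]; apply/L1_B1.
  by have [? ? _ _] := last_edge_spec j.
Qed.

Lemma path_system_covers f : H f -> B0 (tl f) -> ~ B1 (tl f) -> B1 (hd f) ->
  exists j, List.In f (P j).2.
Proof.
move=> Hf tl0 tlN hd1.
have /(Permutation_in _ (Permutation_sym last_edges_perm)) : List.In f L1 by apply/L1_B1.
move=> /List.in_map_iff [j [fj _]]; exists j; rewrite -fj in tl0 *.
have [_ _ _ [ej | [] //]] := last_edge_spec j.
by move: tl0; rewrite ej; case: (e_enters j) => _ [].
Qed.

Lemma path_system_ends :
  Permutation (List.map (fun j => endv (P j).1 (P j).2) (enum 'I_l)) (List.map (@hd D) L1).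
Proof.
have -> : List.map (fun j => endv (P j).1 (P j).2) (enum 'I_l) =
          List.map (@hd D) (List.map last_edge (enum 'I_l)).
  by rewrite List.map_map; apply: List.map_ext => j; have [_ _ -> _] := last_edge_spec j.
exact: Permutation_map last_edges_perm.
Qed.

End LastEdges.

Section InDegrees.
Variable D : digraph.
Local Notation V := (vert D).
Local Notation E := (edge D).
Variable H : E -> Prop.

Lemma in_deg_eq_length (X : V -> Prop) n L : in_deg_eq H X n ->
  List.NoDup L -> (forall f, List.In f L <-> H f /\ enters X f) -> length L = n.
Proof.
move=> [L' [L'u [<- L'X]]] Lu LX; apply: Permutation_length.
by apply: NoDup_Permutation => // f; split=> [/LX/L'X | /L'X/LX].
Qed.

Lemma in_deg_atleast_seq (X : V -> Prop) n : in_deg_atleast H X n ->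
  exists L : seq E, [/\ uniq L, size L = n & forall g, g \in L -> H g /\ enters X g].
Proof.
move=> [L [/NoDupP Lu [Ln /List.Forall_forall LX]]].
by exists L; split=> // g /InP /LX.
Qed.

Lemma missing_sub k (Vs : nat -> V -> Prop) (X Y : V -> Prop) :
  (forall v, X v -> Y v) -> missing k Vs Y <= missing k Vs X.
Proof.
move=> XY; apply: sub_count => i /asboolP YN.
by apply/asboolP => v Vv /XY; exact: YN.
Qed.

End InDegrees.

Lemma cut_between_dangerous (D : digraph) k (Vs : nat -> vert D -> Prop)
    (As : nat -> edge D -> Prop) (B0 B1 : vert D -> Prop) l :
  (forall X, nonempty X -> in_deg_atleast (remaining k As) X (missing k Vs X)) ->
  tight k Vs As B0 -> nonempty B1 -> in_deg_eq (remaining k As) B0 l ->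
  forall Z : vert D -> Prop, (forall v, B1 v -> Z v) -> (forall v, Z v -> B0 v) ->
  exists L : seq (edge D),
    [/\ uniq L, l <= size L & forall g, g \in L -> remaining k As g /\ enters Z g].
Proof.
move=> cut [_ [L0 [L0u [L0len L0B0]]]] [v v1] B0l Z B1Z ZB0.
have [L [Lu Llen LZ]] := in_deg_atleast_seq (cut Z (ex_intro _ v (B1Z v v1))).
exists L; split=> //; rewrite Llen -(in_deg_eq_length B0l L0u L0B0) L0len.
exact: missing_sub.
Qed.

Theorem corollary2 (D : digraph) (k : nat)
  (Vs : nat -> vert D -> Prop) (As : nat -> edge D -> Prop)
  (Hsub : forall i, (i < k)%N -> subgraph (Vs i) (As i))
  (Hbr : forall i, (i < k)%N -> branching (Vs i) (As i))
  (Hdisj : forall i j, (i < k)%N -> (j < k)%N -> i <> j ->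
             forall f, As i f -> As j f -> False)
  (Hcut : forall X : vert D -> Prop, nonempty X ->
             in_deg_atleast (remaining k As) X (missing k Vs X))
  (B0 B1 : vert D -> Prop) (HB10 : forall v, B1 v -> B0 v)
  (HB0 : dangerous k Vs As B0) (HB1 : dangerous k Vs As B1)
  (l : nat) (Hl : (1 <= l)%N)
  (HlB0 : in_deg_eq (remaining k As) B0 l)
  (HlB1 : in_deg_eq (remaining k As) B1 l)
  (e : 'I_l -> edge D) (He_inj : injective e)
  (He : forall f, (remaining k As f /\ enters B0 f) <-> exists j, e j = f) :
  (exists P, path_system (remaining k As) B0 B1 e P) /\
  (forall P, path_system (remaining k As) B0 B1 e P ->
     (forall f, remaining k As f -> B0 (tl f) -> ~ B1 (tl f) -> B1 (hd f) ->
        exists j, List.In f (snd (P j))) /\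
     (forall L1 : list (edge D), List.NoDup L1 ->
        (forall f, List.In f L1 <-> (remaining k As f /\ enters B1 f)) ->
        Permutation (List.map (fun j => endv (fst (P j)) (snd (P j))) (enum 'I_l))
                    (List.map (@hd D) L1))).
Proof.
have e_enters j : remaining k As (e j) /\ enters B0 (e j) by apply/He; exists j.
split.
  apply: (edge_disjoint_paths HB10 e_enters) => [f Hf f0 | ]; first exact/He.
  exact: cut_between_dangerous Hcut HB0.1 HB1.1.1 HlB0.
move=> P HP; have [L1 [_ [L1len L1B1]]] := HlB1.
split=> [f | L2 L2u L2B1].
  exact: (path_system_covers HB10 He_inj e_enters HP L1len L1B1).
exact: (path_system_ends HB10 He_inj e_enters HP (in_deg_eq_length HlB1 L2u L2B1) L2B1).
Qed.
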